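(* Let $(L_*,b)$ and $(M_*,b)$ be chain complexes, $i:(L_*,b)\to(M_*,b)$ and $p:(M_*,b)\to(L_*,b)$ chain maps, and $h$ a map of degree $+1$ on $M_*$ with $ip=1+bh+hb$. Let $\delta$ be a small perturbation, put $A=(1-\delta h)^{-1}\delta$, and define $$i_\infty=i+hAi,\quad p_\infty=p+pAh,\quad b_\infty=b+pAi.$$ Then $$b_\infty(p_\infty i-1)=(p_\infty i-1)b\qquad\text{and}\qquad (p i_\infty-1)b_\infty=b(p i_\infty-1).$$ That is, $p_\infty i-1:(L_*,b)\to(L_*,b_\infty)$ and $p i_\infty-1:(L_*,b_\infty)\to(L_*,b)$ are chain maps.
   Context: Complexes are chain complexes of modules over a ring, with differentials of degree $-1$. The data $i,p,h$ above is called a homotopy retract (HR) datum. A perturbation $\delta$ is a graded map $M_*\to M_*$ of the same degree as $b$ such that $(b+\delta)^2=0$. It is called small if $1-\delta h$ is invertible. It is known (homological perturbation lemma, HR version) that for a small perturbation, $(L_*,b_\infty)$ is a complex, that $i_\infty:(L_*,b_\infty)\to(M_*,b+\delta)$ and $p_\infty:(M_*,b+\delta)\to(L_*,b_\infty)$ are chain maps, and that $i_\infty p_\infty=1+(b+\delta)h_\infty+h_\infty(b+\delta)$, where $h_\infty=h+hAh$. *)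

From HB Require Import structures.
From mathcomp Require Import all_boot all_order all_algebra.
Set Implicit Arguments. Unset Strict Implicit. Unset Printing Implicit Defensive.
Import Order.TTheory GRing.Theory Num.Theory.
Local Open Scope ring_scope.

(* A graded R-module M_* is a family  M : int -> lmodType R.
   A graded map f : M_* -> N_* of degree d is encoded by ALL its components
   f m n : M m -> N n (each R-linear), subject to the condition that
   f m n = 0 unless n = m + d.  Composition of g after f (f of degree d) is
   (g f) m k = g (m+d) k \o f m (m+d), and a map of degree 0 is encoded
   simply by its diagonal family  f n : M n -> N n.  *)

Definition gmap (R : pzRingType) (M N : int -> lmodType R) :=
  forall m n : int, {linear M m -> N n}.

Definition gmap0 (R : pzRingType) (M N : int -> lmodType R) :=
  forall n : int, {linear M n -> N n}.

Definition has_degree (R : pzRingType) (M N : int -> lmodType R)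
  (d : int) (f : gmap M N) : Prop :=
  forall m n : int, n != m + d -> forall x : M m, f m n x = 0.

(* In what follows: bL is the differential of L_*, i, p the HR maps,
   h the homotopy, delta the perturbation and u (meant to be) the inverse
   (1 - delta h)^{-1}, a map of degree 0. *)

Definition Aop (R : pzRingType) (M : int -> lmodType R)
  (delta : gmap M M) (u : gmap0 M M) (m k : int) (y : M m) : M k :=
  u k (delta m k y).
Arguments Aop {R M} delta u m k y.

Definition iinf (R : pzRingType) (L M : int -> lmodType R)
  (i : gmap0 L M) (h delta : gmap M M) (u : gmap0 M M)
  (n : int) (x : L n) : M n :=
  i n x + h (n - 1) n (Aop delta u n (n - 1) (i n x)).
Arguments iinf {R L M} i h delta u n x.

Definition pinf (R : pzRingType) (L M : int -> lmodType R)
  (p : gmap0 M L) (h delta : gmap M M) (u : gmap0 M M)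
  (n : int) (y : M n) : L n :=
  p n y + p n (Aop delta u (n + 1) n (h n (n + 1) y)).
Arguments pinf {R L M} p h delta u n y.

Definition binf (R : pzRingType) (L M : int -> lmodType R)
  (bL : gmap L L) (i : gmap0 L M) (p : gmap0 M L)
  (delta : gmap M M) (u : gmap0 M M)
  (m k : int) (x : L m) : L k :=
  bL m k x + p k (Aop delta u m k (i m x)).
Arguments binf {R L M} bL i p delta u m k x.

From HB Require Import structures.
From mathcomp Require Import all_boot all_order all_algebra.
From mathcomp Require Import zify.
Set Implicit Arguments. Unset Strict Implicit.
Import GRing.Theory.
Local Open Scope ring_scope.

(** With [A = (1 - delta h)^{-1} delta], the resolvent identities
   [(1 - delta h) A = delta = A (1 - h delta)] and [(b + delta)^2 = 0] yield
   [b A + A b + A i p A = 0]: multiply on the left by the invertible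
   [1 - delta h] and write the argument as [(1 - h delta)(1 + h A)] on the right.
   This identity makes [p_oo] and [i_oo] chain maps between [b + delta] and
   [b_oo]; since moreover [p_oo delta i = p A i = delta i_oo = b_oo - b],
   composing with [i], resp. [p], leaves exactly the two commutation relations. *)

Ltac linearize :=
  repeat progress (rewrite ?opprD ?opprB ?opprK ?oppr0 ?add0r ?addr0 ?sub0r ?subr0;
                   rewrite ?linearD ?linearB ?linearN ?linear0 /=).

(* In a goal [x + r = 0] with [r] a right-nested sum, move the summand [t]
   of [r] to the head of [r]. *)
Ltac bring_to_front t :=
  repeat match goal with |- _ + ?r = 0 =>
    tryif (lazymatch r with ?y + _ => unify y t end) then fail else
    match r with context [?z + (?t' + ?w)] =>
      unify t t'; rewrite (addrCA z t' w) end end.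

Ltac cancel_opposites :=
  lazymatch goal with
  | |- 0 = 0 => reflexivity
  | |- - ?x + _ = 0 => bring_to_front x; rewrite (addKr x); cancel_opposites
  | |- ?x + _ = 0 => bring_to_front (- x); rewrite (addNKr x); cancel_opposites
  end.

(* Proves an identity of signed sums in a Z-module whose two sides cancel
   term by term once all linear maps are pushed through the sums. *)
Ltac zmod_cancel :=
  apply/eqP; rewrite -subr_eq0; apply/eqP; linearize;
  rewrite -[LHS]addr0 -?addrA; cancel_opposites.

Section AopLinear.
Variables (R : pzRingType) (M : int -> lmodType R).
Variables (delta : gmap M M) (u : gmap0 M M) (m k : int).

Lemma Aop_is_linear : linear (Aop delta u m k).
Proof. by move=> a x y; rewrite /Aop !linearP. Qed.
HB.instance Definition _ :=
  GRing.isLinear.Build R (M m) (M k) _ (Aop delta u m k) Aop_is_linear.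

End AopLinear.

Section PerturbedMapsLinear.
Variables (R : pzRingType) (L M : int -> lmodType R).
Variables (bL : gmap L L) (i : gmap0 L M) (p : gmap0 M L).
Variables (h delta : gmap M M) (u : gmap0 M M) (m k : int).

Lemma iinf_is_linear : linear (iinf i h delta u m).
Proof. by move=> a x y; rewrite /iinf !linearP scalerDr addrACA. Qed.
HB.instance Definition _ :=
  GRing.isLinear.Build R (L m) (M m) _ (iinf i h delta u m) iinf_is_linear.

Lemma pinf_is_linear : linear (pinf p h delta u m).
Proof. by move=> a x y; rewrite /pinf !linearP scalerDr addrACA. Qed.
HB.instance Definition _ :=
  GRing.isLinear.Build R (M m) (L m) _ (pinf p h delta u m) pinf_is_linear.

Lemma binf_is_linear : linear (binf bL i p delta u m k).
Proof. by move=> a x y; rewrite /binf !linearP scalerDr addrACA. Qed.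
HB.instance Definition _ :=
  GRing.isLinear.Build R (L m) (L k) _ (binf bL i p delta u m k) binf_is_linear.

End PerturbedMapsLinear.

Section Perturbation.

Variables (R : pzRingType) (L M : int -> lmodType R).
Variables (bL : gmap L L) (bM : gmap M M) (i : gmap0 L M) (p : gmap0 M L).
Variables (h delta : gmap M M) (u : gmap0 M M).

Local Notation A := (Aop delta u).
Local Notation ioo := (iinf i h delta u).
Local Notation poo := (pinf p h delta u).
Local Notation boo := (binf bL i p delta u).

Hypothesis uinvl : forall (n : int) (y : M n),
  u n (y - delta (n + 1) n (h n (n + 1) y)) = y.
Hypothesis uinvr : forall (n : int) (y : M n),
  u n y - delta (n + 1) n (h n (n + 1) (u n y)) = y.

(* Degrees are passed through equations such as [j = n + 1], since e.g.
   [n - 1 + 1] is not convertible to [n] and the modules [M _] depend on them. *)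
Lemma delta_h_A n j k (y : M k) : j = n + 1 ->
  delta j n (h n j (A k n y)) = A k n y - delta k n y.
Proof. by move->; rewrite /Aop -{3}(uinvr (delta k n y)) subKr. Qed.

Lemma A_h_delta n j k (y : M k) : j = n + 1 ->
  A j n (h n j (delta k n y)) = A k n y - delta k n y.
Proof. by move->; rewrite /Aop -{3}(uinvl (delta k n y)) linearB subKr. Qed.

Lemma pinf_delta n k (y : M k) : poo n (delta k n y) = p n (A k n y).
Proof. by rewrite /pinf (A_h_delta _ erefl) linearB subrKC. Qed.

Lemma delta_iinf a c (x : L a) : c = a - 1 -> delta a c (ioo a x) = A a c (i a x).
Proof.
move->; have a_eq : a = a - 1 + 1 by lia.
by rewrite /iinf linearD (delta_h_A _ a_eq) subrKC.
Qed.

Lemma eq0_of_sub_delta_h n j (z : M n) : j = n + 1 ->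
  z - delta j n (h n j z) = 0 -> z = 0.
Proof. by move=> -> z0; rewrite -[z]uinvl z0 linear0. Qed.

Hypothesis bM2 : forall (m k : int) (y : M m),
  bM (m - 1) k (bM m (m - 1) y) = 0.
Hypothesis pert : forall (m k : int) (y : M m),
  bM (m - 1) k (bM m (m - 1) y + delta m (m - 1) y)
  + delta (m - 1) k (bM m (m - 1) y + delta m (m - 1) y) = 0.

Lemma perturbation_sq a c e (y : M a) : c = a - 1 -> e = c - 1 ->
  bM c e (delta a c y) + delta c e (bM a c y) + delta c e (delta a c y) = 0.
Proof.
move=> -> ->; have := @pert a (a - 1 - 1) y; rewrite !linearD bM2 add0r => pert_y.
by rewrite -[RHS]pert_y addrAC addrA.
Qed.

(* This is [(b delta + delta b + delta^2)(1 + h A) = 0], since [delta (1 + h A) = A]. *)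
Lemma perturbation_sq_A a c e (z : M a) : a = c + 1 -> e = c - 1 ->
  bM c e (A a c z) + delta c e (bM a c (z + h c a (A a c z)))
  + delta c e (A a c z) = 0.
Proof.
move=> a_eq e_eq; have delta_w : delta a c (z + h c a (A a c z)) = A a c z.
  by rewrite linearD (delta_h_A z a_eq) subrKC.
have c_eq : c = a - 1 by lia.
by have := perturbation_sq (z + h c a (A a c z)) c_eq e_eq; rewrite delta_w.
Qed.

Hypothesis HR : forall (n : int) (y : M n),
  i n (p n y) = y + bM (n + 1) n (h n (n + 1) y) + h (n - 1) n (bM n (n - 1) y).

Lemma A_ip_A a c e (y : M a) : a = c + 1 -> e = c - 1 ->
  A c e (i c (p c (A a c y))) = - (bM c e (A a c y) + A c e (bM a c y)).
Proof.
move=> ? ?; subst a e; have c_eq : c = c - 1 + 1 by lia.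
apply/eqP; rewrite -addr_eq0 [_ + (_ + _)]addrC; apply/eqP.
apply: (eq0_of_sub_delta_h c_eq); rewrite HR; linearize.
rewrite !(delta_h_A _ c_eq) -[RHS](perturbation_sq_A y erefl erefl).
zmod_cancel.
Qed.

Lemma ip_expand n j k (y : M n) : j = n + 1 -> k = n - 1 ->
  i n (p n y) = y + bM j n (h n j y) + h k n (bM n k y).
Proof. by move=> -> ->; exact: HR. Qed.

Hypothesis ichain : forall (m k : int) (x : L m), bM m k (i m x) = i k (bL m k x).
Hypothesis pchain : forall (m k : int) (y : M m), bL m k (p m y) = p k (bM m k y).

Lemma pinf_chain a c (y : M a) : c = a - 1 ->
  boo a c (poo a y) = poo c (bM a c y + delta a c y).
Proof.
move=> ?; subst c; have a_eq : a = a - 1 + 1 by lia.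
rewrite /binf /pinf -a_eq; linearize; rewrite !pchain HR.
rewrite (A_ip_A (h a (a + 1) y) erefl erefl) (A_h_delta _ a_eq).
zmod_cancel.
Qed.

Lemma iinf_chain a c (x : L a) : c = a - 1 ->
  bM a c (ioo a x) + delta a c (ioo a x) = ioo c (boo a c x).
Proof.
move=> ?; subst c; have a_eq : a = a - 1 + 1 by lia.
rewrite /iinf /binf; linearize.
rewrite (A_ip_A (i a x) a_eq erefl) (ip_expand _ a_eq erefl) !ichain.
rewrite (delta_h_A _ a_eq).
zmod_cancel.
Qed.

Hypothesis degbL : has_degree (-1) bL.
Hypothesis degdelta : has_degree (-1) delta.

Lemma binf_offdeg m k (x : L m) : k != m - 1 -> boo m k x = 0.
Proof. by move=> k_off; rewrite /binf /Aop degbL // degdelta // !linear0 addr0. Qed.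

End Perturbation.

Theorem lemma1p7 (R : pzRingType) (L M : int -> lmodType R)
  (bL : gmap L L) (bM : gmap M M) (i : gmap0 L M) (p : gmap0 M L)
  (h delta : gmap M M) (u : gmap0 M M)
  (* degrees: b, delta of degree -1, h of degree +1 *)
  (degbL : has_degree (-1) bL) (degbM : has_degree (-1) bM)
  (degh : has_degree 1 h) (degdelta : has_degree (-1) delta)
  (* (L_*, b) and (M_*, b) are chain complexes: b^2 = 0 *)
  (bL2 : forall (m k : int) (x : L m), bL (m - 1) k (bL m (m - 1) x) = 0)
  (bM2 : forall (m k : int) (y : M m), bM (m - 1) k (bM m (m - 1) y) = 0)
  (* i and p are chain maps *)
  (ichain : forall (m k : int) (x : L m), bM m k (i m x) = i k (bL m k x))
  (pchain : forall (m k : int) (y : M m), bL m k (p m y) = p k (bM m k y))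
  (* i p = 1 + b h + h b *)
  (HR : forall (n : int) (y : M n),
      i n (p n y) = y + bM (n + 1) n (h n (n + 1) y)
                      + h (n - 1) n (bM n (n - 1) y))
  (* delta is a perturbation: (b + delta)^2 = 0 *)
  (pert : forall (m k : int) (y : M m),
      bM (m - 1) k (bM m (m - 1) y + delta m (m - 1) y)
      + delta (m - 1) k (bM m (m - 1) y + delta m (m - 1) y) = 0)
  (* delta is small, and u = (1 - delta h)^{-1} *)
  (uinvl : forall (n : int) (y : M n),
      u n (y - delta (n + 1) n (h n (n + 1) y)) = y)
  (uinvr : forall (n : int) (y : M n),
      u n y - delta (n + 1) n (h n (n + 1) (u n y)) = y) :
  (* b_oo (p_oo i - 1) = (p_oo i - 1) b *)
  (forall (m k : int) (x : L m),
      binf bL i p delta u m k (pinf p h delta u m (i m x) - x)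
      = pinf p h delta u k (i k (bL m k x)) - bL m k x)
  /\
  (* (p i_oo - 1) b_oo = b (p i_oo - 1) *)
  (forall (m k : int) (x : L m),
      p k (iinf i h delta u k (binf bL i p delta u m k x))
        - binf bL i p delta u m k x
      = bL m k (p m (iinf i h delta u m x) - x)).
Proof.
have b_poo := pinf_chain uinvl uinvr bM2 pert HR pchain.
have b_ioo := iinf_chain uinvl uinvr bM2 pert HR ichain.
have boo_off := binf_offdeg i p u degbL degdelta.
split=> m k x; have [->|k_off] := eqVneq k (m - 1).
- rewrite linearB /= b_poo // ichain linearD /= (pinf_delta p uinvl) /binf.
  zmod_cancel.
- by rewrite boo_off // (degbL _ _ k_off) !linear0 addr0.
- rewrite -b_ioo // linearD /= (delta_iinf i uinvr) // linearB /= pchain /binf.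
  zmod_cancel.
- by rewrite boo_off // (degbL _ _ k_off) !linear0 addr0.
Qed.
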